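(* Let $0\le k<d$ and let $L(X)\in\mathbb F_{q^2}[X]$ satisfy $L(0)\neq0$, $\deg L=t<(q+1)/d$, and $L$ has no root in $A_k$. (i) If there exist an integer $0\le\tau<(q+1)/d$ and $\lambda\in\mu_{q+1}$ such that $\tilde L(x)/L(x)=\lambda x^\tau$ for all $x\in A_k$, then either $\tau=0$ or $(q+1)/d-t\le\tau\le t$. (ii) For $\lambda\in\mu_{q+1}$: $\tilde L(x)/L(x)=\lambda$ for all $x\in A_k$ if and only if $\tilde L(X)=\lambda L(X)$. (iii) For $\lambda\in\mu_{q+1}$ and an integer $\tau$ with $(q+1)/d-t\le\tau\le t$: $\tilde L(x)/L(x)=\lambda x^\tau$ for all $x\in A_k$ if and only if $L(X)=P(X)+X^{(q+1)/d-\tau}Q(X)$ for some $P,Q\in\mathbb F_{q^2}[X]$ with $\deg P=t-\tau$, $\tilde P=\lambda P$, $\deg Q=\tau+t-(q+1)/d$ and $\tilde Q=\lambda\epsilon^kQ$.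
   Context: $q$ is a prime power, $d$ is a positive divisor of $q+1$, and $\epsilon\in\mathbb F_{q^2}^*$ has multiplicative order $d$. $\mu_m$ denotes the subgroup of order $m$ of $\mathbb F_{q^2}^*$. For $0\le k<d$, $A_k=\{x\in\mu_{q+1}: x^{(q+1)/d}=\epsilon^k\}$. For $a\in\mathbb F_{q^2}$, $\bar a=a^q$. For $f(X)=\sum_{i=0}^n a_iX^i\in\mathbb F_{q^2}[X]$ with $a_n\neq0$, $\bar f(X)=\sum_{i=0}^n\bar a_iX^i$ and $\tilde f(X)=X^n\bar f(X^{-1})=\sum_{i=0}^n\bar a_iX^{n-i}$. *)

From HB Require Import structures.
From mathcomp Require Import all_boot all_order all_algebra all_field.
Set Implicit Arguments. Unset Strict Implicit. Unset Printing Implicit Defensive.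
Import GRing.Theory.
Local Open Scope ring_scope.

Definition prime_power (q : nat) : Prop :=
  exists p m : nat, [/\ prime p, (0 < m)%N & q = (p ^ m)%N].

Definition polybar (F : finFieldType) (q : nat) (f : {poly F}) : {poly F} :=
  map_poly (fun a => a ^+ q) f.

(* \tilde f = X^n \bar f(X^{-1}) = sum_{i=0}^n \bar a_i X^{n-i}, n = deg f *)
Definition polytilde (F : finFieldType) (q : nat) (f : {poly F}) : {poly F} :=
  \sum_(i < size f) ((f`_i) ^+ q) *: 'X^((size f).-1 - i).

Definition Aset (F : finFieldType) (q d : nat) (eps : F) (k : nat) : {set F} :=
  [set x : F | (x ^+ q.+1 == 1) && (x ^+ (q.+1 %/ d) == eps ^+ k)].

From HB Require Import structures.
From mathcomp Require Import all_boot all_order all_algebra all_field.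
From mathcomp Require Import zify.
Set Implicit Arguments. Unset Strict Implicit. Unset Printing Implicit Defensive.
Import GRing.Theory.
Local Open Scope ring_scope.

(* For x in A_k we have x^m = c, where m = (q+1)/d and c = eps^k.  Splitting
   L = T + D X^(m-tau) at degree m - tau, the function x^tau L(x) therefore
   agrees on A_k with the polynomial T X^tau + c D of size at most m.  Since
   X^m - c divides X^(q^2) - X, it has m simple roots, all in A_k, so the
   condition ~L(x)/L(x) = lam x^tau on A_k amounts to the polynomial identity
   ~L = lam (T X^tau + c D).  As L(0) != 0, ~L has size t + 1, whence
   tau + size T = t + 1: this gives (i), and tau = 0 gives (ii).  In the range
   of (iii) the identity splits along degree tau into ~T = lam T and
   ~D = lam c D, so P = T and Q = D. *)

Section Polytilde.

Variables (F : finFieldType) (q : nat).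
Implicit Types (f P Q : {poly F}).

Lemma coef_polytilde f j :
  (polytilde q f)`_j = if (j < size f)%N then f`_((size f).-1 - j) ^+ q else 0.
Proof.
rewrite /polytilde coef_sum.
under eq_bigr => i _ do rewrite coefZ coefXn.
case: ltnP => hj; last first.
  by rewrite big1 // => i _; case: eqP => [ji|]; rewrite ?mulr0 //; move: (ltn_ord i); lia.
have hi : ((size f).-1 - j < size f)%N by lia.
rewrite (bigD1 (Ordinal hi)) //= big1 ?addr0.
  rewrite (_ : (size f).-1 - ((size f).-1 - j) = j)%N ?eqxx ?mulr1 //; lia.
move=> i /eqP neq_i; case: eqP => [ji|]; rewrite ?mulr0 //.
by case: neq_i; apply: val_inj => /=; move: (ltn_ord i); lia.
Qed.

Lemma size_polytilde_le f : (size (polytilde q f) <= size f)%N.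
Proof. by apply/leq_sizeP => j hj; rewrite coef_polytilde ltnNge hj. Qed.

Hypothesis q_gt0 : (0 < q)%N.

Lemma size_polytilde f : f`_0 != 0 -> size (polytilde q f) = size f.
Proof.
move=> f0; apply/eqP; rewrite eqn_leq size_polytilde_le /=.
have f_gt0 : (0 < size f)%N.
  by rewrite size_poly_gt0; apply: contraNneq f0 => ->; rewrite coef0.
rewrite -(prednK f_gt0) ltnNge; apply/negP => /leq_sizeP/(_ _ (leqnn _)).
rewrite coef_polytilde subnn ltn_predL f_gt0 => /eqP.
by rewrite expf_eq0 q_gt0 (negbTE f0).
Qed.

(* The reversal reads [P + Q * X^a] backwards; when [size P <= a] the
   coefficients of [P] and [Q * X^a] never overlap. *)
Lemma polytilde_addMXn P Q a : (size P <= a)%N -> Q != 0 ->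
  polytilde q (P + Q * 'X^a) =
    polytilde q P * 'X^(a + size Q - size P) + polytilde q Q.
Proof.
move=> sPa Q0; have sQ_gt0 : (0 < size Q)%N by rewrite size_poly_gt0.
have sL : size (P + Q * 'X^a) = (a + size Q)%N.
  by rewrite addrC size_polyDl size_mulXn //; lia.
have z0 : 0 ^+ q = 0 :> F by rewrite expr0n; case: q q_gt0.
apply/polyP => j; rewrite coefD coefMXn !coef_polytilde sL coefD coefMXn.
have P_hi i : (size P <= i)%N -> P`_i = 0 by move=> ?; apply: nth_default.
case: (ltnP j (a + size Q)) => hj; last first.
  by rewrite !ifF ?addr0 //; apply/negbTE; lia.
case: (ltnP j (size Q)) => hjQ.
  rewrite ltnNge (_ : a <= _)%N; last by lia.
  rewrite P_hi ?add0r; last by lia.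
  by rewrite ifT; [rewrite add0r; congr (Q`_ _ ^+ q); lia | lia].
rewrite ifT ?addr0; last by lia.
case: (ltnP ((a + size Q).-1 - j) (size P)) => hiP.
  rewrite ifF; last by apply/negbTE; lia.
  by rewrite ifT; [congr (P`_ _ ^+ q); lia | lia].
by rewrite P_hi // z0 ifT //; lia.
Qed.

End Polytilde.

Lemma poly_eq0_on_roots_XnsubC (F : finFieldType) (m e : nat) (c : F)
    (R : {poly F}) :
  (0 < m)%N -> (m * e)%N = #|F|.-1 -> c ^+ e = 1 ->
  (size R <= m)%N -> (forall x, x ^+ m = c -> R.[x] = 0) -> R = 0.
Proof.
move=> m_gt0 me ce sRm R0.
(* [X^m - c] divides [X^#|F| - X = X (X^(m e) - c^e)], hence splits with
   simple roots over [F]. *)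
have XnsubC_dvd : 'X^m - c%:P %| \prod_(x <- enum F) ('X - x%:P).
  rewrite big_enum /= -finField_genPoly.
  have -> : #|F| = (m * e).+1.
    by rewrite me prednK //; apply/card_gt0P; exists 0.
  rewrite exprS -[X in _ * _ - X]mulr1 -mulrBr dvdp_mull //.
  have -> : 1 = (c%:P) ^+ e :> {poly F} by rewrite -polyC_exp ce.
  by rewrite exprM subrXX dvdp_mulr.
have [msk eq_roots] := dvdp_prod_XsubC XnsubC_dvd.
set s := mask msk (enum F) in eq_roots.
have size_s : size s = m.
  by have := eqp_size eq_roots; rewrite size_prod_XsubC size_XnsubC // => -[].
apply: (roots_geq_poly_eq0 (rs := s)); last by rewrite size_s.
  apply/allP => x xs; apply/eqP/R0.
  have : root ('X^m - c%:P) x by rewrite (eqp_root eq_roots) root_prod_XsubC.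
  by rewrite /root !hornerE subr_eq0 => /eqP.
by rewrite mask_uniq ?enum_uniq.
Qed.

Lemma mem_Aset (F : finFieldType) (q d : nat) (eps : F) (k : nat) (x : F) :
  (d %| q.+1)%N -> d.-primitive_root eps ->
  (x \in Aset q d eps k) = (x ^+ (q.+1 %/ d) == eps ^+ k).
Proof.
move=> dvd_d prim_eps; rewrite inE.
case: (eqVneq (x ^+ (q.+1 %/ d)) (eps ^+ k)) => [xm|]; rewrite ?andbF // andbT.
by rewrite -(divnK dvd_d) exprM xm -exprM mulnC exprM (prim_expr_order prim_eps) expr1n eqxx.
Qed.

Section MulXnMod.

Variable F : fieldType.
Implicit Types (L : {poly F}) (c : F).

(* [X^tau * L] reduced modulo [X^m - c], when [size L <= m] and [tau <= m]. *)
Definition mulXn_mod (m tau : nat) c L : {poly F} :=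
  take_poly (m - tau) L * 'X^tau + c *: drop_poly (m - tau) L.

Lemma horner_mulXn_mod m tau c L x : (tau <= m)%N -> x ^+ m = c ->
  (mulXn_mod m tau c L).[x] = L.[x] * x ^+ tau.
Proof.
move=> le_tau_m xm; rewrite -[in RHS](poly_take_drop (m - tau) L) !hornerE.
by rewrite mulrDl -mulrA -exprD subnK // xm [c * _]mulrC.
Qed.

Lemma mulXn_mod0 m c L : (size L <= m)%N -> mulXn_mod m 0 c L = L.
Proof.
move=> sLm; rewrite /mulXn_mod subn0 take_poly_id // drop_poly_eq0 //.
by rewrite scaler0 addr0 mulr1.
Qed.

Lemma take_poly_neq0 n L : (0 < n)%N -> L`_0 != 0 -> take_poly n L != 0.
Proof.
move=> n_gt0 L0; apply: contraNneq L0 => T0.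
by have := coef_take_poly n L 0; rewrite n_gt0 T0 coef0 => <-.
Qed.

Lemma size_mulXn_mod m tau c L : (tau < m)%N -> (size L <= m)%N -> L`_0 != 0 ->
  size (mulXn_mod m tau c L) = (tau + size (take_poly (m - tau) L))%N.
Proof.
move=> lt_tau_m sLm L0.
have T0 : take_poly (m - tau) L != 0 by rewrite take_poly_neq0 ?subn_gt0.
rewrite /mulXn_mod size_polyDl size_mulXn //.
apply: leq_ltn_trans (size_scale_leq _ _) _.
by rewrite size_drop_poly -size_poly_gt0 in T0 *; lia.
Qed.

End MulXnMod.

Section TildeRatio.

Variables (F : finFieldType) (q m e : nat) (c : F) (A : {set F}).
Variables (L : {poly F}) (t : nat).
Hypothesis q_gt0 : (0 < q)%N.
Hypotheses (me : (m * e)%N = #|F|.-1) (ce : c ^+ e = 1).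
Hypothesis memA : forall x, (x \in A) = (x ^+ m == c).
Hypotheses (sizeL : size L = t.+1) (lt_t_m : (t < m)%N) (L0 : L`_0 != 0).
Hypothesis L_neq0_A : forall x, x \in A -> L.[x] != 0.

Let sizeL_le : (size L <= m)%N. Proof. by rewrite sizeL. Qed.

Lemma tilde_ratioP tau lam : (tau < m)%N ->
  (forall x, x \in A -> (polytilde q L).[x] / L.[x] = lam * x ^+ tau) <->
  polytilde q L = lam *: mulXn_mod m tau c L.
Proof.
move=> lt_tau_m.
have evalA x : x \in A -> (lam *: mulXn_mod m tau c L).[x] = lam * x ^+ tau * L.[x].
  rewrite memA => /eqP xm.
  by rewrite hornerZ (horner_mulXn_mod _ (ltnW lt_tau_m) xm) mulrA mulrAC.
split=> [ratio | -> x xA]; last by rewrite evalA // mulfK ?L_neq0_A.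
apply/eqP; rewrite -subr_eq0; apply/eqP.
apply: (poly_eq0_on_roots_XnsubC _ me ce); first by lia.
  apply: leq_trans (size_polyD _ _) _; rewrite size_polyN geq_max.
  rewrite (leq_trans (size_polytilde_le _ _)) //=.
  apply: leq_trans (size_scale_leq _ _) _.
  by rewrite size_mulXn_mod // -leq_subRL ?size_take_poly // ltnW.
move=> x xm; have xA : x \in A by rewrite memA xm.
by rewrite hornerD hornerN evalA // -(ratio x xA) divfK ?subrr ?L_neq0_A.
Qed.

Lemma size_take_tilde_ratio tau lam : (tau < m)%N -> lam != 0 ->
  polytilde q L = lam *: mulXn_mod m tau c L ->
  (tau + size (take_poly (m - tau) L))%N = t.+1.
Proof.
move=> lt_tau_m lam0 E; have := congr1 (fun p : {poly F} => size p) E.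
by rewrite /= size_polytilde // size_scale // size_mulXn_mod // sizeL.
Qed.

Lemma tilde_ratio_exponent tau lam : (tau < m)%N -> lam != 0 ->
  (forall x, x \in A -> (polytilde q L).[x] / L.[x] = lam * x ^+ tau) ->
  tau = 0%N \/ (m - t <= tau <= t)%N.
Proof.
move=> lt_tau_m lam0 /(tilde_ratioP _ lt_tau_m) /(size_take_tilde_ratio lt_tau_m lam0).
have T0 : take_poly (m - tau) L != 0 by rewrite take_poly_neq0 ?subn_gt0.
case: (leqP (size L) (m - tau)) => [sLT | ltT].
  by rewrite take_poly_id // sizeL => ?; left; lia.
by rewrite -size_poly_gt0 sizeL in T0 ltT *; right; lia.
Qed.

Lemma tilde_ratio_const lam :
  (forall x, x \in A -> (polytilde q L).[x] / L.[x] = lam) <->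
  polytilde q L = lam *: L.
Proof.
have ratio0P := tilde_ratioP lam (leq_ltn_trans (leq0n t) lt_t_m).
rewrite mulXn_mod0 // in ratio0P.
split=> [ratio | tL x xA].
  by apply/ratio0P => x xA; rewrite ratio // expr0 mulr1.
by rewrite (ratio0P.2 tL) // expr0 mulr1.
Qed.

Lemma tilde_ratio_decomposition tau lam : lam != 0 -> (m - t <= tau <= t)%N ->
  (forall x, x \in A -> (polytilde q L).[x] / L.[x] = lam * x ^+ tau) <->
  exists P Q : {poly F},
    [/\ L = P + 'X^(m - tau) * Q,
        size P = (t - tau).+1,
        polytilde q P = lam *: P,
        size Q = (tau + t - m).+1
      & polytilde q Q = (lam * c) *: Q].
Proof.
move=> lam0 /andP[tau_lb tau_ub]; have lt_tau_m : (tau < m)%N by lia.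
apply: iff_trans (tilde_ratioP _ lt_tau_m) _.
split=> [E | [P [Q [eL sP tP sQ tQ]]]].
  set P := take_poly (m - tau) L; set Q := drop_poly (m - tau) L.
  have sP : size P = (t - tau).+1.
    by have := size_take_tilde_ratio lt_tau_m lam0 E; rewrite -/P; lia.
  have sQ : size Q = (tau + t - m).+1 by rewrite size_drop_poly sizeL; lia.
  have Q0 : Q != 0 by rewrite -size_poly_gt0 sQ.
  have tL : polytilde q L = polytilde q P * 'X^tau + polytilde q Q.
    rewrite -{1}(poly_take_drop (m - tau) L) polytilde_addMXn ?size_take_poly //.
    by rewrite sP sQ (_ : m - tau + (tau + t - m).+1 - (t - tau).+1 = tau)%N //; lia.
  move: E; rewrite tL /mulXn_mod scalerDr scalerAl scalerA.
  have sQ_le : (size Q <= tau)%N by rewrite sQ; lia.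
  have sQ_tilde : (size (polytilde q Q) <= tau)%N := leq_trans (size_polytilde_le _ _) sQ_le.
  have sQ_scale : (size ((lam * c) *: Q) <= tau)%N := leq_trans (size_scale_leq _ _) sQ_le.
  move=> E; exists P, Q; split => //.
  - by rewrite mulrC poly_take_drop.
  - by move: (congr1 (drop_poly tau) E); rewrite ![_ * _ + _]addrC !drop_polyDMXn.
  - by move: (congr1 (take_poly tau) E); rewrite ![_ * _ + _]addrC !take_polyDMXn.
have sPm : (size P <= m - tau)%N by rewrite sP; lia.
have Q0 : Q != 0 by rewrite -size_poly_gt0 sQ.
rewrite eL mulrC /mulXn_mod take_polyDMXn // drop_polyDMXn // polytilde_addMXn //.
rewrite tP tQ sP sQ (_ : _ - _ = tau)%N; last by lia.
by rewrite scalerDr scalerAl scalerA.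
Qed.

End TildeRatio.

Theorem lemma2p1 (F : finFieldType) (q : nat) (hq : prime_power q)
  (hF : #|F| = (q ^ 2)%N) (d : nat) (hd0 : (0 < d)%N) (hd : (d %| q.+1)%N)
  (eps : F) (heps : d.-primitive_root eps) (k : nat) (hk : (k < d)%N)
  (L : {poly F}) (t : nat) (hL0 : L.[0] != 0) (hdeg : size L = t.+1)
  (ht : (t < q.+1 %/ d)%N)
  (hroot : forall x, x \in Aset q d eps k -> L.[x] != 0) :
  (* (i) *)
  (forall (tau : nat) (lam : F), (tau < q.+1 %/ d)%N -> lam ^+ q.+1 = 1 ->
     (forall x, x \in Aset q d eps k ->
        (polytilde q L).[x] / L.[x] = lam * x ^+ tau) ->
     tau = 0%N \/ (q.+1 %/ d - t <= tau <= t)%N)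
  /\
  (* (ii) *)
  (forall lam : F, lam ^+ q.+1 = 1 ->
     ((forall x, x \in Aset q d eps k -> (polytilde q L).[x] / L.[x] = lam)
      <-> polytilde q L = lam *: L))
  /\
  (* (iii) *)
  (forall (lam : F) (tau : nat), lam ^+ q.+1 = 1 ->
     (q.+1 %/ d - t <= tau <= t)%N ->
     ((forall x, x \in Aset q d eps k ->
         (polytilde q L).[x] / L.[x] = lam * x ^+ tau)
      <->
      exists P Q : {poly F},
        [/\ L = P + 'X^(q.+1 %/ d - tau) * Q,
            size P = (t - tau).+1,
            polytilde q P = lam *: P,
            size Q = (tau + t - q.+1 %/ d).+1
          & polytilde q Q = (lam * eps ^+ k) *: Q])).
Proof.
have q_gt0 : (0 < q)%N.
  have : (0 < #|F|)%N by apply/card_gt0P; exists 0.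
  by rewrite hF expn_gt0 orbF.
have card_F : (q.+1 %/ d * (d * q.-1))%N = #|F|.-1.
  by rewrite mulnA divnK // hF -mulnn; nia.
have eps_pow : eps ^+ k ^+ (d * q.-1) = 1.
  by rewrite -exprM mulnCA exprM (prim_expr_order heps) expr1n.
have memA x := mem_Aset k x hd heps.
have L0 : L`_0 != 0 by rewrite -horner_coef0.
have lam_neq0 (lam : F) : lam ^+ q.+1 = 1 -> lam != 0.
  by move=> lam1; apply: contra_eq_neq lam1 => ->; rewrite expr0n eq_sym oner_neq0.
split; [|split].
- move=> tau lam lt_tau /lam_neq0 lam0.
  exact: (tilde_ratio_exponent q_gt0 card_F eps_pow memA hdeg ht L0 hroot lt_tau lam0).
- move=> lam _.
  exact: (tilde_ratio_const q_gt0 card_F eps_pow memA hdeg ht L0 hroot).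
- move=> lam tau /lam_neq0 lam0 tau_range.
  exact: (tilde_ratio_decomposition q_gt0 card_F eps_pow memA hdeg ht L0 hroot lam0
            tau_range).
Qed.
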